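(* For every dimension $d\ge 2$ and every starting point $x_0\in\mathbb{R}^d$, there exist a distribution $\rho$ over $\mathbb{R}^d\times\mathbb{R}$ and a point $x'_*\in\mathbb{R}^d$ such that: $H=\mathbb{E}_\rho[aa^\top]$ is invertible and $x'_*$ is the minimizer of $\mathcal{R}(x)=\frac12\mathbb{E}_\rho(\langle x,a\rangle-b)^2$; $\mathbb{E}[\|a\|^2 aa^\top]\preccurlyeq H$ (i.e. the fourth-moment condition with $R^2=1$); $\mathbb{E}[(b-\langle x'_*,a\rangle)^2aa^\top]=0$ (the noise condition with $\sigma=0$); $\mathbb{E}[\|a\|^2_{H^{-1}}aa^\top]\preccurlyeq dH$ (the statistical condition number bound with $\tilde\kappa=d$); $\|x'_*-x_0\|^2=1$; and for every stochastic first order algorithm (as defined in the context) run on i.i.d. samples from $\rho$ starting at $x_0$, $$\mathbb{E}[\mathcal{R}(x_{\lfloor d/2\rfloor})]-\mathcal{R}(x'_* )=\Omega\!\left(\frac1d\right),$$ i.e. it is at least $c/d$ for a universal constant $c>0$ independent of $d$, $x_0$ and the algorithm.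
   Context: $\preccurlyeq$ is the Loewner order, $\|a\|^2_{H^{-1}}=a^\top H^{-1}a$. Given i.i.d. samples $(a_i,b_i)_{i\ge0}$ from $\rho$ and an initial point $x_0$, a stochastic first order algorithm generates iterates $x_k$ with $x_k\in x_0+\mathrm{span}\{\nabla_0 f(x_0),\nabla_1 f(x_1),\dots,\nabla_{k-1}f(x_{k-1})\}$ for $k\ge1$, where $\nabla_i f(x)=a_i(\langle a_i,x\rangle-b_i)$ is the stochastic gradient at iteration $i$. *)

From HB Require Import structures.
From mathcomp Require Import all_boot all_order all_algebra.
From mathcomp Require Import all_classical all_reals all_analysis.
Set Implicit Arguments. Unset Strict Implicit. Unset Printing Implicit Defensive.
Import Order.TTheory GRing.Theory Num.Theory.
Local Open Scope ring_scope.

(* A finitely supported distribution rho over R^d x R, given as a list of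
   (weight, (a, b)) atoms; vectors of R^d are column vectors 'cV[R]_d. *)
Definition fdist (R : realType) (d : nat) := seq (R * ('cV[R]_d * R)).

Definition fdist_wf (R : realType) d (rho : fdist R d) : Prop :=
  (forall p, p \in rho -> 0 < p.1) /\ \sum_(p <- rho) p.1 = 1.

Definition fmass (R : realType) d (rho : fdist R d) (z : 'cV[R]_d * R) : R :=
  \sum_(p <- rho | p.2 == z) p.1.

Definition Efd (R : realType) d (V : lmodType R) (rho : fdist R d)
    (f : 'cV[R]_d * R -> V) : V :=
  \sum_(p <- rho) p.1 *: f p.2.

Definition dotv (R : realType) d (x y : 'cV[R]_d) : R := (x^T *m y) 0 0.
Definition sqnorm (R : realType) d (x : 'cV[R]_d) : R := dotv x x.

Definition outer (R : realType) d (a : 'cV[R]_d) : 'M[R]_d := a *m a^T.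

Definition Hmat (R : realType) d (rho : fdist R d) : 'M[R]_d :=
  Efd rho (fun z => outer z.1).

Definition risk (R : realType) d (rho : fdist R d) (x : 'cV[R]_d) : R :=
  2^-1 * Efd rho (fun z => (dotv x z.1 - z.2) ^+ 2).

Definition loewner_le (R : realType) d (A B : 'M[R]_d) : Prop :=
  forall v : 'cV[R]_d, (v^T *m A *m v) 0 0 <= (v^T *m B *m v) 0 0.

Definition sgrad (R : realType) d (z : 'cV[R]_d * R) (x : 'cV[R]_d) : 'cV[R]_d :=
  (dotv z.1 x - z.2) *: z.1.

Definition iid_samples (R : realType) d (rho : fdist R d)
    (dO : measure_display) (Omega : measurableType dO)
    (P : probability Omega R) (smp : nat -> Omega -> 'cV[R]_d * R) : Prop :=
  (forall i z, measurable (smp i @^-1` [set z])%classic) /\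
  (forall i z, P (smp i @^-1` [set z])%classic = (fmass rho z)%:E) /\
  (forall (n : nat) (zs : nat -> 'cV[R]_d * R),
     P [set w | forall i, (i < n)%N -> smp i w = zs i]%classic
       = (\prod_(i < n) fmass rho (zs i))%:E).

(* x is a stochastic first order algorithm started at x0 on samples smp:
   for every k (for k = 0 this forces x 0 = x0) and every outcome w,
   x_k - x0 lies in span { grad_i f(x_i) : i < k }. *)
Definition sfo_algorithm (R : realType) d
    (dO : measure_display) (Omega : measurableType dO)
    (smp : nat -> Omega -> 'cV[R]_d * R) (x0 : 'cV[R]_d)
    (x : nat -> Omega -> 'cV[R]_d) : Prop :=
  (forall k (i : 'I_d), measurable_fun setT (fun w => x k w i 0)) /\
  (forall k w, (((x k w - x0)^T <=
      \matrix_(i < k) (sgrad (smp i w) (x i w))^T)%MS)).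

(* The hard distribution puts mass 1/d on each sample (e_j, xs_j), where
   xs = x0 + (1/sqrt d) (1, ..., 1).  Then H = I/d, the fourth-moment, noise and
   condition-number bounds hold with equality, and R(x) = |x - xs|^2 / (2d).
   Every stochastic gradient a (<a, x> - b) is a multiple of the sampled basis
   vector e_j, so almost surely x_k - x0 is supported on at most k coordinates.
   For k = floor(d/2), at least d/2 coordinates of x_k still miss xs by
   1/sqrt d, whence R(x_k) >= (d/2) (1/d) / (2d) = 1/(4d).  Only the marginal
   laws of the samples matter. *)

From HB Require Import structures.
From mathcomp Require Import all_boot all_order all_algebra.
From mathcomp Require Import all_classical all_reals all_analysis.
From mathcomp Require Import lra zify measurable_realfun.
Import Order.TTheory GRing.Theory Num.Theory.
Local Open Scope ring_scope.
Set Implicit Arguments. Unset Strict Implicit. Unset Printing Implicit Defensive.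

Definition fsupp (R : realType) d (rho : fdist R d) : seq ('cV[R]_d * R) :=
  undup [seq p.2 | p <- rho].

Lemma sum_fmass_fsupp (R : realType) d (rho : fdist R d) :
  \sum_(z <- fsupp rho) fmass rho z = \sum_(p <- rho) p.1.
Proof.
rewrite /fmass (exchange_big_dep predT) //=; apply: eq_big_seq => p rho_p.
have supp_p : p.2 \in fsupp rho by rewrite mem_undup map_f.
rewrite -big_filter (@eq_filter _ _ (pred1 p.2)); last by move=> z; rewrite /= eq_sym.
by rewrite filter_pred1_uniq ?undup_uniq // big_seq1.
Qed.

Local Open Scope classical_set_scope.

Lemma iid_samples_ae_fsupp (R : realType) d (rho : fdist R d)
    (dO : measure_display) (Omega : measurableType dO)
    (P : probability Omega R) (smp : nat -> Omega -> 'cV[R]_d * R) :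
  fdist_wf rho -> iid_samples rho P smp ->
  \forall w \ae P, forall i, smp i w \in fsupp rho.
Proof.
move=> [_ rho1] [msmp [smp_law _]]; apply: ae_foralln => i.
pose A := smp i @^-1` [set z | z \in fsupp rho].
have A_cup : A = \bigcup_(z in [set` fsupp rho]) smp i @^-1` [set z].
  apply/seteqP; split => [w /= Aw | w [z /= supp_z smp_z]]; first by exists (smp i w).
  by rewrite /A /= smp_z.
have mA : measurable A.
  by rewrite A_cup; apply: fin_bigcup_measurable => //; exact: finite_seq.
have PA : P A = 1%E.
  rewrite A_cup measure_fin_bigcup //.
  - rewrite -fsbig_seq ?undup_uniq //.
    by rewrite (eq_bigr _ (fun z _ => smp_law i z)) sumEFin sum_fmass_fsupp rho1.
  - exact: finite_seq.
  - by move=> z z' _ _ [w [/= <- <-]].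
exists (~` A); split; first exact: measurableC.
  by have := probability_setC P mA; rewrite PA subee.
by move=> w.
Qed.

Lemma expectation_ge_ae (R : realType) (dO : measure_display)
    (Omega : measurableType dO) (P : probability Omega R) (c : R)
    (f : Omega -> R) :
  0 <= c -> measurable_fun setT f -> (forall w, 0 <= f w) ->
  (\forall w \ae P, c <= f w) -> (c%:E <= \int[P]_w (f w)%:E)%E.
Proof.
move=> c0 mf f0 c_le_f.
rewrite -[c%:E]mule1 -(probability_setT P) -integral_cst //.
apply: ae_ge0_le_integral => //=.
- by move=> w _; rewrite lee_fin.
- exact/measurable_EFinP.
- by move: c_le_f; apply: filterS => w cw _; rewrite lee_fin.
Qed.

Local Close Scope classical_set_scope.

Lemma submx_rows_support (F : fieldType) k n (v : 'rV[F]_n) (M : 'M[F]_(k, n))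
    (J : 'I_k -> 'I_n) :
  (forall i j, j != J i -> M i j = 0) -> (v <= M)%MS ->
  forall j, j \notin [set J i | i : 'I_k] -> v 0 j = 0.
Proof.
move=> M_supp /submxP [D ->] j j_notin; rewrite mxE big1 // => i _.
by rewrite M_supp ?mulr0 //; apply: contraNneq j_notin => ->; apply: imset_f.
Qed.

Lemma sum_delta_diag (F : pzRingType) n : \sum_(j < n) delta_mx j j = 1%:M :> 'M[F]_n.
Proof.
apply/matrixP => a b; rewrite summxE !mxE (bigD1 a) //= big1 => [|k /negPf ka].
  by rewrite !mxE eqxx addr0 eq_sym.
by rewrite !mxE eq_sym ka.
Qed.

Lemma quarter_inv_le_ratio (F : realFieldType) (D n : F) :
  0 < D -> D <= n * 2 -> (4 * D)^-1 <= (2 * D)^-1 * (n / D).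
Proof.
move=> D_gt0 D_le; have e_gt0 : 0 < D^-1 by rewrite invr_gt0.
have De : D * D^-1 = 1 by rewrite mulfV ?gt_eqF.
have : 0 <= D^-1 * D^-1 * (n * 2 - D) by rewrite !mulr_ge0 ?subr_ge0 // ltW.
rewrite !invfM; move: D^-1 e_gt0 De => e; nra.
Qed.

Section CoordinateDistribution.
Variables (R : realType) (d : nat).
Implicit Types (x y xs : 'cV[R]_d).

Definition coord_dist xs : fdist R d :=
  [seq (d%:R^-1, (delta_mx j 0, xs j 0)) | j <- index_enum 'I_d].

Lemma Efd_coord_dist (V : lmodType R) xs (f : 'cV[R]_d * R -> V) :
  Efd (coord_dist xs) f = \sum_j d%:R^-1 *: f (delta_mx j 0, xs j 0).
Proof. by rewrite /Efd big_map. Qed.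

Lemma dotv_delta x j : dotv x (delta_mx j 0) = x j 0.
Proof.
rewrite /dotv !mxE (bigD1 j) //= big1 ?addr0; first by rewrite !mxE !eqxx mulr1.
by move=> k /negPf kj; rewrite !mxE kj mulr0.
Qed.

Lemma sqnorm_delta j : sqnorm (delta_mx j 0 : 'cV[R]_d) = 1.
Proof. by rewrite /sqnorm dotv_delta mxE !eqxx. Qed.

Lemma outer_delta j : outer (delta_mx j 0 : 'cV[R]_d) = delta_mx j j.
Proof. by rewrite /outer trmx_delta mul_delta_mx. Qed.

Lemma Hmat_coord_dist xs : Hmat (coord_dist xs) = d%:R^-1%:M.
Proof.
rewrite /Hmat Efd_coord_dist; under eq_bigr do rewrite outer_delta.
by rewrite -scaler_sumr sum_delta_diag scalemx1.
Qed.

Lemma risk_coord_dist xs x :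
  risk (coord_dist xs) x = (2 * d%:R)^-1 * \sum_j (x j 0 - xs j 0) ^+ 2.
Proof.
rewrite /risk Efd_coord_dist -scaler_sumr invfM mulrA; congr (_ * _ * _).
by apply: eq_bigr => j _; rewrite /= dotv_delta.
Qed.

Lemma risk_coord_dist_ge0 xs x : 0 <= risk (coord_dist xs) x.
Proof. by rewrite risk_coord_dist mulr_ge0 ?sumr_ge0 // => j _; rewrite sqr_ge0. Qed.

Lemma risk_coord_dist_min xs : risk (coord_dist xs) xs = 0.
Proof. by rewrite risk_coord_dist big1 ?mulr0 // => j _; rewrite subrr expr0n. Qed.

Lemma fourth_moment_coord_dist xs :
  Efd (coord_dist xs) (fun z => sqnorm z.1 *: outer z.1) = Hmat (coord_dist xs).
Proof. by rewrite /Hmat !Efd_coord_dist; under eq_bigr do rewrite sqnorm_delta scale1r. Qed.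

Lemma noise_coord_dist xs :
  Efd (coord_dist xs) (fun z => (z.2 - dotv xs z.1) ^+ 2 *: outer z.1) = 0.
Proof.
by rewrite Efd_coord_dist big1 // => j _; rewrite /= dotv_delta subrr expr0n !scale0r scaler0.
Qed.

Lemma fsupp_coord_distP xs z :
  z \in fsupp (coord_dist xs) -> exists j, z = (delta_mx j 0, xs j 0).
Proof. by rewrite mem_undup -map_comp => /mapP [j _ ->]; exists j. Qed.

Lemma coord_dist_span_sparse xs (zs : nat -> 'cV[R]_d * R) (ys : nat -> 'cV[R]_d)
    k (v : 'cV[R]_d) :
  (forall i, zs i \in fsupp (coord_dist xs)) ->
  (v^T <= \matrix_(i < k) (sgrad (zs i) (ys i))^T)%MS ->
  exists2 S : {set 'I_d}, (#|S| <= k)%N & forall j, j \notin S -> v j 0 = 0.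
Proof.
move=> zs_supp v_span.
have /all_sig [J zsJ] i : {j | zs i = (delta_mx j 0, xs j 0)}.
  by apply/cid/fsupp_coord_distP.
exists [set J i | i : 'I_k].
  by rewrite (leq_trans (leq_imset_card _ _)) ?card_ord.
move=> j /(submx_rows_support _ v_span) <-; first by rewrite mxE.
by move=> i l lJ; rewrite !mxE zsJ /sgrad /= mxE (negPf lJ) andbT mulr0.
Qed.

Lemma measurable_risk_coord_dist (dO : measure_display) (Omega : measurableType dO)
    xs (y : Omega -> 'cV[R]_d) :
  (forall j, measurable_fun setT (fun w => y w j 0)) ->
  measurable_fun setT (fun w => risk (coord_dist xs) (y w)).
Proof.
move=> y_meas; under eq_fun do rewrite risk_coord_dist.
apply: measurable_funM => //; apply: measurable_sum => j.
by apply: measurable_funX; apply: measurable_funB.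
Qed.

Definition unit_ones : 'cV[R]_d := const_mx (Num.sqrt d%:R)^-1.

Lemma unit_ones_sq j : unit_ones j 0 ^+ 2 = d%:R^-1.
Proof. by rewrite mxE exprVn sqr_sqrtr ?ler0n. Qed.

Hypothesis d_gt0 : (0 < d)%N.

Lemma natr_d_neq0 : d%:R != 0 :> R.
Proof. by rewrite pnatr_eq0 -lt0n. Qed.

Lemma coord_dist_wf xs : fdist_wf (coord_dist xs).
Proof.
split; first by move=> p /mapP [j _ ->]; rewrite invr_gt0 ltr0n.
by rewrite big_map sumr_const card_ord -(mulr_natl d%:R^-1) mulfV ?natr_d_neq0.
Qed.

Lemma Hmat_coord_dist_unit xs : Hmat (coord_dist xs) \in unitmx.
Proof.
by rewrite Hmat_coord_dist unitmxE det_scalar unitfE expf_neq0 ?invr_eq0 ?natr_d_neq0.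
Qed.

Lemma stat_condition_coord_dist xs :
  Efd (coord_dist xs) (fun z => dotv z.1 (invmx (Hmat (coord_dist xs)) *m z.1) *: outer z.1)
  = d%:R *: Hmat (coord_dist xs).
Proof.
rewrite [in RHS]/Hmat !Efd_coord_dist scaler_sumr; apply: eq_bigr => j _ /=.
rewrite Hmat_coord_dist invmx_scalar invrK mul_scalar_mx.
rewrite /dotv -scalemxAr mxE -/(dotv (delta_mx j 0) (delta_mx j 0)) dotv_delta.
by rewrite mxE !eqxx mulr1 scalerA mulrC -scalerA.
Qed.

Lemma sqnorm_unit_ones : sqnorm unit_ones = 1.
Proof.
rewrite /sqnorm /dotv mxE; under eq_bigr do rewrite mxE -expr2 unit_ones_sq.
by rewrite sumr_const card_ord -(mulr_natl d%:R^-1) mulfV ?natr_d_neq0.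
Qed.

Lemma risk_coord_dist_sparse_ge x0 y (S : {set 'I_d}) :
  (#|S| <= d./2)%N -> (forall j, j \notin S -> y j 0 = x0 j 0) ->
  (4 * d%:R)^-1 <= risk (coord_dist (x0 + unit_ones)) y.
Proof.
move=> S_small y_off_S.
have half_d : d%:R <= #|~: S|%:R * 2 :> R.
  rewrite -natrM ler_nat muln2.
  have := cardsC S; rewrite card_ord.
  have := odd_double_half d; lia.
have missed j : j \in ~: S -> (y j 0 - (x0 + unit_ones) j 0) ^+ 2 = d%:R^-1.
  rewrite inE => /y_off_S ->.
  by rewrite [(x0 + _) j 0]mxE opprD addrA subrr add0r sqrrN unit_ones_sq.
have d_gt0R : 0 < d%:R :> R by rewrite ltr0n.
rewrite risk_coord_dist; apply: le_trans (quarter_inv_le_ratio d_gt0R half_d) _.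
rewrite ler_wpM2l ?invr_ge0 ?mulr_ge0 ?ler0n // (bigID (mem (~: S))) /=.
rewrite -[leLHS]addr0 lerD ?sumr_ge0 // => [|j _]; last by rewrite sqr_ge0.
by rewrite (eq_bigr _ missed) sumr_const mulr_natl.
Qed.

End CoordinateDistribution.

Theorem lemma5 (R : realType) :
  exists c : R, 0 < c /\
  forall (d : nat), (2 <= d)%N -> forall x0 : 'cV[R]_d,
  exists (rho : fdist R d) (xs : 'cV[R]_d),
    fdist_wf rho /\
    Hmat rho \in unitmx /\
    (forall x, risk rho xs <= risk rho x) /\
    loewner_le (Efd rho (fun z => sqnorm z.1 *: outer z.1)) (Hmat rho) /\
    Efd rho (fun z => (z.2 - dotv xs z.1) ^+ 2 *: outer z.1) = 0 /\
    loewner_le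
      (Efd rho (fun z => dotv z.1 (invmx (Hmat rho) *m z.1) *: outer z.1))
      (d%:R *: Hmat rho) /\
    sqnorm (xs - x0) = 1 /\
      forall (dO : measure_display) (Omega : measurableType dO)
             (P : probability Omega R)
             (smp : nat -> Omega -> 'cV[R]_d * R)
             (x : nat -> Omega -> 'cV[R]_d),
        iid_samples rho P smp -> sfo_algorithm smp x0 x ->
        ((\int[P]_w (risk rho (x d./2 w))%:E) - (risk rho xs)%:E
           >= (c / d%:R)%:E)%E.
Proof.
exists 4^-1; split; first by rewrite invr_gt0 ltr0n.
move=> d d_ge2 x0; have d_gt0 : (0 < d)%N by apply: leq_trans d_ge2.
exists (coord_dist (x0 + unit_ones R d)), (x0 + unit_ones R d).
split; first exact: coord_dist_wf.
split; first exact: Hmat_coord_dist_unit.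
split; first by move=> y; rewrite risk_coord_dist_min risk_coord_dist_ge0.
split; first by move=> v; rewrite fourth_moment_coord_dist.
split; first exact: noise_coord_dist.
split; first by move=> v; rewrite stat_condition_coord_dist.
split; first by rewrite addrC addKr sqnorm_unit_ones.
move=> dO Omega P smp x smp_iid [x_meas x_span].
rewrite risk_coord_dist_min sube0 -invfM.
apply: expectation_ge_ae.
- by rewrite invr_ge0 mulr_ge0 ?ler0n.
- exact: measurable_risk_coord_dist.
- by move=> w; exact: risk_coord_dist_ge0.
move: (iid_samples_ae_fsupp (coord_dist_wf d_gt0 _) smp_iid); apply: filterS => w supp_w.
have [S S_small x_off_S] := coord_dist_span_sparse (ys := x^~ w) supp_w (x_span d./2 w).
apply: (risk_coord_dist_sparse_ge d_gt0 (leq_trans S_small _)) => // j /x_off_S.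
by rewrite !mxE => /subr0_eq.
Qed.
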